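(* Let $G$, $\mathrm{b}$, $(w_{ij})$, the update sequence $A$, Async-BP and the generalized computation trees $R_i^t$ be as in the context. Then Async-BP solves the minimum weight perfect tree-$\mathrm{b}$-matching problem on the generalized computation tree: for each vertex $i$ of $G$ and each $t$, the set $E_i(t)$ chosen at the end of iteration $t$ by Async-BP is exactly the set of $b_i$ edges attached to the root (via labels) in the minimum weight perfect tree-$\mathrm{b}$-matching of $R_i^t$.
   Context: Let $G=(V,E)$ be a finite undirected simple graph, $V=\{1,\dots,n\}$, with real edge weights $w_{ij}$ and positive integers $b_i$ with $\deg_G(i)\ge b_i+1$; $N(i)$ is the neighbour set of $i$. Let $\vec E=\{(i\to j):\{i,j\}\in E\}$ and let $A=(\vec E(1),\vec E(2),\dots)$ be a sequence of subsets of $\vec E$ such that if $(i\to j)\in\vec E(t)\cap\vec E(t+s)$ and $(i\to j)\notin\bigcup_{r=1}^{s-1}\vec E(t+r)$ then $(\ell\to i)\in\bigcup_{r=1}^{s-1}\vec E(t+r)$ for some $\ell\in N(i)\setminus\{j\}$. Async-BP: $m_{i\to j}(0)=w_{ij}$; for $t\ge1$, $m_{i\to j}(t)=w_{ij}-\big(b_i\text{-th smallest of }\{m_{\ell\to i}(t-1):\ell\in N(i)\setminus\{j\}\}\big)$ if $(i\to j)\in\vec E(t)$, else $m_{i\to j}(t)=m_{i\to j}(t-1)$; $E_i(t)$ consists of the $b_i$ edges $\{i,j\}$ whose incoming messages $m_{j\to i}(t)$ are smallest (neighbours ordered by nondecreasing incoming message). Computation branches: for $(i\to j)\in\vec E$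 and $t\ge0$, $R^t_{i\to j}$ is the rooted labelled tree whose root is labelled $j$ and has a single child labelled $i$; if $t=0$ it is just this edge; if $t>0$ and $(i\to j)\notin\vec E(t)$ then $R^t_{i\to j}=R^{t-1}_{i\to j}$; otherwise the node $i$ has $\deg_G(i)-1$ children labelled by the elements of $N(i)\setminus\{j\}$, and for each such child $r$, the subtree consisting of $r$, its descendants and the edge $\{r,i\}$ is a copy of $R^{t-1}_{r\to i}$. Each edge between nodes labelled $a,c$ has weight $w_{ac}$. The generalized computation tree $R_i^t$ is the rooted tree with root labelled $i$ whose branches from the root are the computation branches $R^t_{r\to i}$, $r\in N(i)$ (glued at their roots). A perfect tree-$\mathrm{b}$-matching of $R_i^t$ is a set of its edges such that every non-leaf node labelled $s$ is incident to exactly $b_s$ of them; the minimum weight one minimizes total weight. *)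

From HB Require Import structures.
From mathcomp Require Import all_boot all_order all_algebra.
Set Implicit Arguments. Unset Strict Implicit. Unset Printing Implicit Defensive.
Import Order.TTheory GRing.Theory Num.Theory.
Local Open Scope ring_scope.

Inductive ltree (V : Type) := LNode of V & seq (ltree V).

(* A tree together with a subset of its edges: each child edge carries a
   boolean saying whether the edge (parent -- child) is selected. *)
Inductive mtree (V : Type) := MNode of V & seq (bool * mtree V).

Section Defs.
Variables (R : realFieldType) (V : finType).
Variables (e : rel V) (w : V -> V -> R) (b : V -> nat).
Variable (A : nat -> {set V * V}).

Definition nbr (i : V) : {set V} := [set j | e i j].

(* k-th smallest (k >= 1) element of a finite list of reals (with multiplicity) *)
Definition kth_smallest (k : nat) (s : seq R) : R :=
  nth 0 (sort (fun x y : R => x <= y) s) k.-1.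

(* Async-BP messages: msg t i j = m_{i -> j}(t) *)
Fixpoint msg (t : nat) : V -> V -> R :=
  match t with
  | 0 => fun i j => w i j
  | t'.+1 => fun i j =>
      if (i, j) \in A t'.+1 then
        w i j - kth_smallest (b i) [seq msg t' l i | l <- enum (nbr i :\ j)]
      else msg t' i j
  end.

(* S is a valid choice of E_i(t): b_i neighbours of i whose incoming messages
   m_{j -> i}(t) are the smallest (ties broken arbitrarily). *)
Definition is_E (t : nat) (i : V) (S : {set V}) : Prop :=
  [/\ S \subset nbr i, #|S| = b i &
      forall j k, j \in S -> k \in nbr i :\: S -> msg t j i <= msg t k i].

(* branch t i j : the subtree of the computation branch R^t_{i -> j} hanging
   below the root j, i.e. the node labelled i together with its descendants. *)
Fixpoint branch (t : nat) (i j : V) : ltree V :=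
  match t with
  | 0 => LNode i [::]
  | t'.+1 =>
      if (i, j) \in A t'.+1 then
        LNode i [seq branch t' r i | r <- enum (nbr i :\ j)]
      else branch t' i j
  end.

Definition comp_tree (t : nat) (i : V) : ltree V :=
  LNode i [seq branch t r i | r <- enum (nbr i)].

Definition mlabel (m : mtree V) : V := let: MNode s _ := m in s.

Fixpoint erase (m : mtree V) : ltree V :=
  let: MNode s cs := m in LNode s [seq erase c.2 | c <- cs].

(* every non-leaf node labelled s is incident to exactly b s selected edges;
   pm says whether the edge to the parent is selected *)
Fixpoint perfect_from (pm : bool) (m : mtree V) : bool :=
  let: MNode s cs := m in
  (nilp cs || (count (fun c => c.1) cs + pm == b s)%N) &&
  all (fun c => perfect_from c.1 c.2) cs.

Definition perfect (m : mtree V) : bool := perfect_from false m.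

Fixpoint mweight (m : mtree V) : R :=
  let: MNode s cs := m in
  foldr (fun c acc => (if c.1 then w s (mlabel c.2) else 0) + mweight c.2 + acc) 0 cs.

Definition min_perfect_matching (T : ltree V) (M : mtree V) : Prop :=
  [/\ erase M = T, perfect M &
      forall M', erase M' = T -> perfect M' -> mweight M <= mweight M'].

Definition root_matched (M : mtree V) : {set V} :=
  let: MNode _ cs := M in
  [set x | has (fun c => c.1 && (mlabel c.2 == x)) cs].

End Defs.

From HB Require Import structures.
From mathcomp Require Import all_boot all_order all_algebra ring.
Import Order.TTheory GRing.Theory Num.Theory.
Local Open Scope ring_scope.
Set Implicit Arguments. Unset Strict Implicit.

(* Dynamic programming on the computation tree.  For the branch below an edge
   r -- i, let M_in and M_out be minimum perfect tree-b-matchings of the branch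
   in which the edge to the parent does, resp. does not, count towards the b_r
   edges at r.  At a node s with children C, selecting the child edges in X
   costs  sum_C W(M_out r) + sum_X (w_sr + W(M_in r) - W(M_out r)),  so by an
   exchange argument an optimal X consists of the children of smallest
   selection cost.  By induction on t, m_{r -> i}(t) = w_ri + W(M_in) - W(M_out):
   taking the b_r rather than the b_r - 1 cheapest children of r adds exactly
   the b_r-th smallest incoming message.  The root of R_i^t has no parent edge,
   so the b_i neighbours with smallest incoming messages are an optimal choice. *)

Section GreedySubsets.
Variables (R : realFieldType) (T : finType) (C : {set T}) (d : T -> R).

Lemma greedy_sum_le (X Y : {set T}) :
  X \subset C -> Y \subset C -> #|X| = #|Y| ->
  {in X & C :\: X, forall x y, d x <= d y} ->
  \sum_(r in X) d r <= \sum_(r in Y) d r.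
Proof.
move=> XC YC cXY greedyX.
rewrite (big_setID Y) [leRHS](big_setID X) /= setIC lerD2l.
have cXY_YX : #|X :\: Y| = #|Y :\: X| by rewrite !cardsD setIC cXY.
case k0: #|Y :\: X| => [|k].
  move/eqP: (k0); rewrite cards_eq0 => /eqP ->.
  by move/eqP: cXY_YX; rewrite k0 cards_eq0 => /eqP ->; rewrite !big_set0.
(* compare the two sums termwise after multiplying both by k + 1 *)
rewrite -(ler_pMn2r (R:=R) (ltn0Sn k)).
have -> : (\sum_(x in X :\: Y) d x) *+ k.+1
    = \sum_(y in Y :\: X) \sum_(x in X :\: Y) d x by rewrite sumr_const k0.
have -> : (\sum_(y in Y :\: X) d y) *+ k.+1
    = \sum_(y in Y :\: X) \sum_(x in X :\: Y) d y.
  by rewrite -sumrMnl; apply: eq_bigr => y _; rewrite sumr_const cXY_YX k0.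
apply: ler_sum => y; rewrite !inE => /andP[yX yY].
apply: ler_sum => x; rewrite inE => /andP[_ xX]; apply: greedyX => //.
by rewrite inE yX (subsetP YC).
Qed.

Definition sort_by_cost : seq T := sort (relpre d <=%R) (enum C).

Definition cheapest (q : nat) : {set T} := [set x in take q sort_by_cost].

Lemma mem_sort_by_cost x : (x \in sort_by_cost) = (x \in C).
Proof. by rewrite mem_sort mem_enum. Qed.

Lemma sort_by_cost_uniq : uniq sort_by_cost.
Proof. by rewrite sort_uniq enum_uniq. Qed.

Lemma cheapest_sub q : cheapest q \subset C.
Proof.
by apply/subsetP => x; rewrite inE => /mem_take; rewrite mem_sort_by_cost.
Qed.

Lemma card_cheapest q : (q <= #|C|)%N -> #|cheapest q| = q.
Proof.
move=> qC; rewrite cardsE (card_uniqP (take_uniq q sort_by_cost_uniq)).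
by rewrite size_takel // size_sort -cardE.
Qed.

Lemma cheapest_greedy q : {in cheapest q & C :\: cheapest q, forall x y, d x <= d y}.
Proof.
move=> x y; rewrite !inE => xq /andP[yq yC].
have : sorted (relpre d <=%R) sort_by_cost.
  by apply: sort_sorted => u v; apply: le_total.
have d_trans : transitive (relpre d <=%R) by move=> u v t; apply: le_trans.
rewrite (sorted_pairwise d_trans) -(cat_take_drop q sort_by_cost).
rewrite pairwise_cat => /andP[/allrelP take_le_drop _]; apply: take_le_drop => //.
have : y \in sort_by_cost by rewrite mem_sort_by_cost.
by rewrite -{1}(cat_take_drop q sort_by_cost) mem_cat (negbTE yq).
Qed.

Lemma sum_cheapestS q : (q < #|C|)%N ->
  \sum_(r in cheapest q.+1) d r
    = \sum_(r in cheapest q) d r + kth_smallest q.+1 [seq d r | r <- enum C].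
Proof.
have sum_take p :
    \sum_(r in cheapest p) d r = \sum_(x <- take p [seq d r | r <- sort_by_cost]) x.
  rewrite -map_take big_map big_uniq ?take_uniq ?sort_by_cost_uniq //.
  by apply: eq_bigl => r; rewrite inE.
move=> qC; rewrite !sum_take (take_nth 0) ?size_map ?size_sort -?cardE //.
by rewrite -cats1 big_cat big_seq1 /kth_smallest sort_map.
Qed.

End GreedySubsets.

Lemma map_factor_uniq (X Y : Type) (Z : eqType) (x0 : X) (f : X -> Y) (F : Z -> Y)
    (cs : seq X) (s : seq Z) :
  uniq s -> map f cs = map F s ->
  exists2 g : Z -> X, cs = map g s & {in s, forall r, f (g r) = F r}.
Proof.
elim: s cs => [|a s IH] [|c cs] //=; first by exists (fun=> x0).
move=> /andP[a_s s_uniq] [fc_Fa fcs_Fs]; have [g -> fg_F] := IH cs s_uniq fcs_Fs.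
exists (fun r => if r == a then c else g r).
  rewrite eqxx; congr (_ :: _); apply/eq_in_map => r r_s.
  by case: eqP r_s => // ->; rewrite (negbTE a_s).
by move=> r; rewrite inE; case: eqP => [-> | _ /= /fg_F].
Qed.

Lemma count_enum_set (T : finType) (P : pred T) (C : {set T}) :
  count P (enum C) = #|[set r in C | P r]|.
Proof.
rewrite -sum1_count big_enum_cond -sum1_card.
by apply: eq_bigl => r; rewrite inE.
Qed.

Section TreeMatchings.
Variables (R : realFieldType) (V : finType) (w : V -> V -> R) (b : V -> nat).

Definition llabel (T : ltree V) : V := let: LNode s _ := T in s.

Lemma mlabel_erase (M : mtree V) : llabel (erase M) = mlabel M.
Proof. by case: M. Qed.

Definition min_perfect_from (pm : bool) (T : ltree V) (M : mtree V) : Prop :=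
  [/\ erase M = T, perfect_from b pm M &
      forall M', erase M' = T -> perfect_from b pm M' -> mweight w M <= mweight w M'].

Lemma mweightE s (cs : seq (bool * mtree V)) : mweight w (MNode s cs) =
  \sum_(c <- cs) ((if c.1 then w s (mlabel c.2) else 0) + mweight w c.2).
Proof. by elim: cs => [|c cs IH]; rewrite ?big_nil // big_cons -IH. Qed.

Definition select_cost (s : V) (Min Mout : V -> mtree V) (r : V) : R :=
  w s r + mweight w (Min r) - mweight w (Mout r).

Section NodeMatching.
Variables (s : V) (C : {set V}) (T : V -> ltree V) (Min Mout : V -> mtree V).
Hypothesis T_label : {in C, forall r, llabel (T r) = r}.
Hypothesis Min_opt : {in C, forall r, min_perfect_from true (T r) (Min r)}.
Hypothesis Mout_opt : {in C, forall r, min_perfect_from false (T r) (Mout r)}.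

Let cost := select_cost s Min Mout.

Lemma mlabel_Min r : r \in C -> mlabel (Min r) = r.
Proof. by move=> rC; case: (Min_opt rC) => eMin _ _; rewrite -mlabel_erase eMin T_label. Qed.

Definition node_matching (X : {set V}) : mtree V :=
  MNode s [seq (r \in X, if r \in X then Min r else Mout r) | r <- enum C].

Lemma erase_node_matching (X : {set V}) :
  erase (node_matching X) = LNode s [seq T r | r <- enum C].
Proof.
congr LNode; rewrite -map_comp; apply/eq_in_map => r; rewrite mem_enum => rC /=.
by case: (r \in X); [case: (Min_opt rC) | case: (Mout_opt rC)].
Qed.

Lemma perfect_node_matching (pm : bool) (X : {set V}) : X \subset C -> (#|X| + pm = b s)%N ->
  perfect_from b pm (node_matching X).
Proof.
move=> XC cardX; apply/andP; split.
  rewrite count_map count_enum_set -cardX.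
  apply/orP; right; apply/eqP; congr (_ + _)%N; apply: eq_card => r.
  by rewrite !inE; case: (boolP (r \in X)) => [/(subsetP XC) | ]; rewrite ?andbF ?andbT.
rewrite all_map; apply/allP => r; rewrite mem_enum => rC /=.
by case: (r \in X); [case: (Min_opt rC) | case: (Mout_opt rC)].
Qed.

Lemma mweight_node_matching (X : {set V}) : X \subset C ->
  mweight w (node_matching X) = \sum_(r in C) mweight w (Mout r) + \sum_(r in X) cost r.
Proof.
move=> XC; rewrite mweightE big_map big_enum /=.
have -> : \sum_(r in X) cost r = \sum_(r in C | r \in X) cost r.
  by apply: eq_bigl => r; rewrite andb_idl // => /(subsetP XC).
rewrite big_mkcondr /= -big_split /=; apply: eq_bigr => r rC.
case: (r \in X); last by rewrite add0r addr0.
by rewrite mlabel_Min // /cost /select_cost addrC subrK.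
Qed.

Lemma mweight_node_ge (g : V -> bool * mtree V) :
  {in C, forall r, erase (g r).2 = T r /\ perfect_from b (g r).1 (g r).2} ->
  \sum_(r in C) mweight w (Mout r) + \sum_(r in [set r in C | (g r).1]) cost r
    <= mweight w (MNode s [seq g r | r <- enum C]).
Proof.
move=> g_ok; rewrite mweightE big_map big_enum /=.
have -> : \sum_(r in [set r in C | (g r).1]) cost r = \sum_(r in C | (g r).1) cost r.
  by apply: eq_bigl => r; rewrite inE.
rewrite big_mkcondr /= -big_split /=; apply: ler_sum => r rC.
case: (g_ok r rC); case: (g r) => [[] M] /= eM pM.
  rewrite -mlabel_erase eM T_label // /cost /select_cost addrC subrK lerD2l.
  by case: (Min_opt rC) => _ _; apply.
by rewrite addr0 add0r; case: (Mout_opt rC) => _ _; apply.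
Qed.

Lemma node_matching_min (pm : bool) (X : {set V}) : (0 < #|C|)%N -> X \subset C -> (#|X| + pm = b s)%N ->
  {in X & C :\: X, forall x y, cost x <= cost y} ->
  min_perfect_from pm (LNode s [seq T r | r <- enum C]) (node_matching X).
Proof.
move=> C_gt0 XC cardX greedyX; split.
- exact: erase_node_matching.
- exact: perfect_node_matching.
case=> _ cs [-> erase_cs] perfect_cs.
have [g cs_g g_erase] := map_factor_uniq (false, Mout s) (enum_uniq (mem C)) erase_cs.
subst cs.
have g_ok : {in C, forall r, erase (g r).2 = T r /\ perfect_from b (g r).1 (g r).2}.
  move=> r rC; split; first by apply: g_erase; rewrite mem_enum.
  by case/andP: perfect_cs => _; rewrite all_map => /allP; apply; rewrite mem_enum.
apply: le_trans (mweight_node_ge g_ok); rewrite mweight_node_matching // lerD2l.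
apply: (greedy_sum_le XC) => //; first by apply/subsetP => r; rewrite inE => /andP[].
case/andP: perfect_cs => /orP[|/eqP]; first by rewrite /nilp size_map -cardE eqn0Ngt C_gt0.
by rewrite count_map count_enum_set -cardX => /addIn.
Qed.

Lemma root_matched_node_matching (X : {set V}) :
  X \subset C -> root_matched (node_matching X) = X.
Proof.
move=> XC; apply/setP => x; rewrite inE has_map.
apply/hasP/idP => [[r] | xX]; first rewrite mem_enum => rC /= /andP[rX /eqP <-].
  by rewrite rX mlabel_Min.
by exists x; rewrite ?mem_enum ?(subsetP XC) //= xX mlabel_Min ?(subsetP XC) /=.
Qed.

End NodeMatching.
End TreeMatchings.

Section ComputationTree.
Variables (R : realFieldType) (V : finType) (e : rel V)
  (w : V -> V -> R) (b : V -> nat) (A : nat -> {set V * V}).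
Hypothesis w_sym : forall i j, e i j -> w i j = w j i.
Hypothesis b_pos : forall i, (0 < b i)%N.
Hypothesis deg_b : forall i, (b i + 1 <= #|nbr e i|)%N.

Lemma branch_label t r i : llabel (branch e A t r i) = r.
Proof. by elim: t => //= t IH; case: ifP. Qed.

Definition branch_solution t r i (Min Mout : mtree V) : Prop :=
  [/\ min_perfect_from w b true (branch e A t r i) Min,
      min_perfect_from w b false (branch e A t r i) Mout &
      msg e w b A t r i = w r i + mweight w Min - mweight w Mout].

Lemma branch_solutions t i :
  (forall r, exists Min Mout, branch_solution t r i Min Mout) ->
  exists Min Mout : V -> mtree V, forall r, branch_solution t r i (Min r) (Mout r).
Proof.
move=> sol.
have /fin_all_exists[MM MM_sol] :
    forall r, exists MM : mtree V * mtree V, branch_solution t r i MM.1 MM.2.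
  by move=> r; have [Min [Mout ?]] := sol r; exists (Min, Mout).
by exists (fun r => (MM r).1), (fun r => (MM r).2).
Qed.

Lemma select_cost_msg t i (C : {set V}) (Min Mout : V -> mtree V) :
  C \subset nbr e i -> (forall r, branch_solution t r i (Min r) (Mout r)) ->
  {in C, forall r, select_cost w i Min Mout r = msg e w b A t r i}.
Proof.
move=> CN sol r rC; case: (sol r) => _ _ ->; rewrite /select_cost w_sym //.
by move: (subsetP CN r rC); rewrite inE.
Qed.

Lemma card_nbrD1 i j : (b i <= #|nbr e i :\ j|)%N.
Proof.
rewrite -(leq_add2r 1) (leq_trans (deg_b i)) // (cardsD1 j) addnC leq_add2l.
exact: leq_b1.
Qed.

Lemma branch_solution_exists t r i : exists Min Mout, branch_solution t r i Min Mout.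
Proof.
elim: t r i => [|t IH] r i.
  have leaf pm : min_perfect_from w b pm (LNode r [::]) (MNode r [::]).
    by split=> // -[s [|c cs]] // [].
  by exists (MNode r [::]), (MNode r [::]); split=> //=; rewrite addr0 subr0.
rewrite /branch_solution /=; case: ifP => _; last exact: IH.
set C := nbr e r :\ i.
have [Min [Mout sol]] := branch_solutions (fun l => IH l r).
have cardC : (b r <= #|C|)%N := card_nbrD1 r i.
have T_label : {in C, forall l, llabel (branch e A t l r) = l}.
  by move=> l _; apply: branch_label.
have Min_opt : {in C, forall l, min_perfect_from w b true (branch e A t l r) (Min l)}.
  by move=> l _; case: (sol l).
have Mout_opt : {in C, forall l, min_perfect_from w b false (branch e A t l r) (Mout l)}.
  by move=> l _; case: (sol l).
set d := select_cost w r Min Mout.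
have opt (pm : bool) q : (q <= #|C|)%N -> (q + pm = b r)%N ->
    min_perfect_from w b pm (LNode r [seq branch e A t l r | l <- enum C])
      (node_matching r C Min Mout (cheapest C d q)).
  move=> qC qb; apply: (node_matching_min T_label Min_opt Mout_opt).
  - exact: leq_trans (b_pos r) cardC.
  - exact: cheapest_sub.
  - by rewrite card_cheapest.
  - exact: cheapest_greedy.
have pred_b_lt : ((b r).-1 < #|C|)%N by rewrite prednK.
exists (node_matching r C Min Mout (cheapest C d (b r).-1)),
       (node_matching r C Min Mout (cheapest C d (b r))).
split; first (apply: opt; [exact: ltnW | by rewrite addn1 prednK]).
  by apply: opt; rewrite ?addn0.
rewrite !(mweight_node_matching _ _ T_label Min_opt) ?cheapest_sub //.
have -> : [seq msg e w b A t l r | l <- enum C] = [seq d l | l <- enum C].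
  apply/eq_in_map => l; rewrite mem_enum => lC.
  by rewrite /d (select_cost_msg (subD1set _ _) sol lC).
rewrite -/d -[in cheapest C d (b r)](prednK (b_pos r)) sum_cheapestS // prednK //.
ring.
Qed.

End ComputationTree.

Theorem corollary2 (R : realFieldType) (V : finType) (e : rel V)
  (w : V -> V -> R) (b : V -> nat) (A : nat -> {set V * V})
  (e_sym : symmetric e) (e_irr : irreflexive e)
  (w_sym : forall i j, e i j -> w i j = w j i)
  (b_pos : forall i, (0 < b i)%N)
  (deg_b : forall i, (b i + 1 <= #|nbr e i|)%N)
  (A_dir : forall t p, p \in A t -> e p.1 p.2)
  (A_sched : forall (t s : nat) (i j : V), (1 <= t)%N -> (1 <= s)%N ->
      (i, j) \in A t -> (i, j) \in A (t + s)%N ->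
      (forall r, (1 <= r < s)%N -> (i, j) \notin A (t + r)%N) ->
      exists l r, [/\ l \in nbr e i :\ j, (1 <= r < s)%N & (l, i) \in A (t + r)%N]) :
  forall (i : V) (t : nat) (S : {set V}),
    is_E e w b A t i S ->
    exists M : mtree V,
      min_perfect_matching w b (comp_tree e A t i) M /\ root_matched M = S.
Proof.
move=> i t S [SN cardS S_greedy].
have [Min [Mout sol]] :=
  branch_solutions (fun r => branch_solution_exists A w_sym b_pos deg_b t r i).
have T_label : {in nbr e i, forall r, llabel (branch e A t r i) = r}.
  by move=> r _; apply: branch_label.
have Min_opt : {in nbr e i, forall r, min_perfect_from w b true (branch e A t r i) (Min r)}.
  by move=> r _; case: (sol r).
have Mout_opt :
    {in nbr e i, forall r, min_perfect_from w b false (branch e A t r i) (Mout r)}.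
  by move=> r _; case: (sol r).
exists (node_matching i (nbr e i) Min Mout S).
split; last exact: (root_matched_node_matching _ _ T_label Min_opt).
apply: (node_matching_min T_label Min_opt Mout_opt) => //.
- by apply: leq_trans (deg_b i); rewrite addn1.
- by rewrite addn0.
move=> x y xS yN_S; have yN := subsetP (subsetDl _ _) y yN_S.
have cost_msg := select_cost_msg w_sym (subxx _) sol.
rewrite (cost_msg x (subsetP SN x xS)) (cost_msg y yN).
exact: S_greedy.
Qed.
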